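(* Let $r\ge2$ be an integer, $c>0$ and $f\in\mathcal{P}_c$. Then for every $n\in\mathbb{N}_0$, $$H_tf(x)=\min_{k\in\{0,1,\dots,r^n\}}q_f\Big(t,x;\frac{k}{r^n}\Big)\quad\text{for all }(t,x)\in\Big[\frac{1}{2cr^n},\infty\Big)\times[0,1].$$
   Context: $C_p(\mathbb{R})$ denotes the set of all continuous functions $f:\mathbb{R}\to\mathbb{R}$ periodic with period $1$ with $f(0)=0$; $\mathbb{N}_0=\mathbb{N}\cup\{0\}$. For such $f$, $q_f(t,x;z)=f(z)+\frac{1}{2t}(x-z)^2$ and $H_tf(x)=\inf_{z\in\mathbb{R}}q_f(t,x;z)$ for $t>0$, $x\in\mathbb{R}$. For $(n,k,y)\in\mathbb{N}_0\times\mathbb{Z}\times(0,1)$: $\delta^+_{n,k}(y;f)=\dfrac{f(\frac{k+1}{r^n})-f(\frac{k+y}{r^n})}{\frac{1-y}{r^n}}$, $\delta^-_{n,k}(y;f)=\dfrac{f(\frac{k+y}{r^n})-f(\frac{k}{r^n})}{\frac{y}{r^n}}$. $\mathcal{P}_c$ is the set of $f\in C_p(\mathbb{R})$ with $\delta^+_{n,k}(y;f)-\delta^-_{n,k}(y;f)\le-c$ for all $(n,k,y)\in\mathbb{N}_0\times\mathbb{Z}\times(0,1)$. *)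

From Stdlib Require Import Reals List.
From Coquelicot Require Import Coquelicot.
Open Scope R_scope.

Definition Cp (f : R -> R) : Prop :=
  (forall x, continuity_pt f x) /\ (forall x, f (x + 1) = f x) /\ f 0 = 0.

Definition qf (f : R -> R) (t x z : R) : R := f z + (x - z) ^ 2 / (2 * t).

Definition Ht (f : R -> R) (t x : R) : Rbar :=
  Glb_Rbar (fun y => exists z : R, y = qf f t x z).

Definition delta_plus (r : nat) (n : nat) (k : Z) (y : R) (f : R -> R) : R :=
  (f ((IZR k + 1) / INR r ^ n) - f ((IZR k + y) / INR r ^ n)) / ((1 - y) / INR r ^ n).

Definition delta_minus (r : nat) (n : nat) (k : Z) (y : R) (f : R -> R) : R :=
  (f ((IZR k + y) / INR r ^ n) - f (IZR k / INR r ^ n)) / (y / INR r ^ n).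

Definition Pc (r : nat) (c : R) (f : R -> R) : Prop :=
  Cp f /\
  forall (n : nat) (k : Z) (y : R), 0 < y < 1 ->
    delta_plus r n k y f - delta_minus r n k y f <= - c.

Definition min_grid (f : R -> R) (r n : nat) (t x : R) : R :=
  fold_right Rmin (qf f t x 0)
    (map (fun k : nat => qf f t x (INR k / INR r ^ n)) (seq 0 (r ^ n + 1))).

(* On a grid cell [k/N, (k+1)/N] with N = r^n, membership in P_c makes f
   lie above its chord by at least c y (1 - y) / N at the point (k + y)/N,
   while the convex term (x - z)^2 / (2t) lies below its chord by exactly
   y (1 - y) / (2 t N^2).  For t >= 1/(2cN) the first gap wins, so q_f(t,x;.)
   is above its chord on every cell and its infimum over [0,1] is attained on
   the grid.  The case n = 0 with f = 0 at the integers gives f >= 0, so for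
   x in [0,1] the points z outside [0,1] do no better than z = 0 or z = 1. *)

From Stdlib Require Import Reals List Lra Lia ZArith.
From Coquelicot Require Import Coquelicot.
Open Scope R_scope.

Lemma fold_right_Rmin_le (d v : R) (l : list R) :
  In v l -> fold_right Rmin d l <= v.
Proof.
  induction l as [|a l IH]; simpl; [tauto|].
  intros [->|Hv]; [apply Rmin_l|].
  eapply Rle_trans; [apply Rmin_r | now apply IH].
Qed.

Lemma fold_right_Rmin_mem (d : R) (l : list R) :
  fold_right Rmin d l = d \/ In (fold_right Rmin d l) l.
Proof.
  induction l as [|a l IH]; simpl; [now left|].
  apply Rmin_case_strong; intros _; [right; now left|].
  destruct IH as [H|H]; [now left | right; now right].
Qed.

Lemma Glb_Rbar_range_attained (g : R -> R) (m : R) :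
  (forall z, m <= g z) -> (exists z, m = g z) ->
  Glb_Rbar (fun y => exists z, y = g z) = Finite m.
Proof.
  intros Hlb [z0 Hz0].
  apply is_glb_Rbar_unique; split.
  - intros v [z ->]; apply Hlb.
  - intros b Hb; rewrite Hz0; apply Hb; now exists z0.
Qed.

Lemma min_grid_le f r n t x (k : nat) :
  (k <= r ^ n)%nat -> min_grid f r n t x <= qf f t x (INR k / INR r ^ n).
Proof.
  intros Hk; apply fold_right_Rmin_le, in_map_iff.
  exists k; split; [reflexivity | apply in_seq; lia].
Qed.

Lemma min_grid_attained f r n t x : exists z, min_grid f r n t x = qf f t x z.
Proof.
  unfold min_grid.
  destruct (fold_right_Rmin_mem (qf f t x 0)
    (map (fun k : nat => qf f t x (INR k / INR r ^ n)) (seq 0 (r ^ n + 1))))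
    as [-> | Hin].
  - now exists 0.
  - apply in_map_iff in Hin as [k [<- _]].
    now exists (INR k / INR r ^ n).
Qed.

Lemma unit_interval_grid_cell (m : nat) (z : R) :
  (0 < m)%nat -> 0 <= z < 1 ->
  exists (k : nat) (y : R), (k < m)%nat /\ 0 <= y < 1 /\ z = (INR k + y) / INR m.
Proof.
  intros Hm Hz.
  assert (HmR : 0 < INR m) by (apply lt_0_INR; lia).
  destruct (nfloor_ex (z * INR m)) as [k Hk]; [nra|].
  exists k, (z * INR m - INR k); repeat split; try lra.
  - apply INR_lt; nra.
  - field; lra.
Qed.

Lemma secant_slope_gap_above_chord (a b p N c y : R) :
  0 < N -> 0 < y < 1 ->
  (b - p) / ((1 - y) / N) - (p - a) / (y / N) <= - c ->
  y * b + (1 - y) * a + c * y * (1 - y) / N <= p.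
Proof.
  intros HN Hy Hslope.
  assert (Hyy : 0 < y * (1 - y)) by nra.
  replace ((b - p) / ((1 - y) / N) - (p - a) / (y / N))
    with (N * (y * b + (1 - y) * a - p) / (y * (1 - y))) in Hslope
    by (field; lra).
  apply Rle_div_l in Hslope; [|lra].
  assert (Hgap : c * y * (1 - y) / N <= - (y * b + (1 - y) * a - p)).
  { apply Rle_div_l; [lra | nra]. }
  lra.
Qed.

Lemma qf_le_of_closer (f : R -> R) (t x a z : R) :
  0 < t -> f a <= f z -> (x - a) ^ 2 <= (x - z) ^ 2 -> qf f t x a <= qf f t x z.
Proof.
  intros Ht Hf Hd; unfold qf.
  apply Rplus_le_compat; [exact Hf|].
  apply Rmult_le_compat_r; [left; apply Rinv_0_lt_compat|]; lra.
Qed.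

Lemma qf_cell_min_le (f : R -> R) (N c t x k y : R) :
  0 < N -> 0 < c -> 1 / (2 * c * N) <= t -> 0 < y < 1 ->
  y * f ((k + 1) / N) + (1 - y) * f (k / N) + c * y * (1 - y) / N <= f ((k + y) / N) ->
  Rmin (qf f t x (k / N)) (qf f t x ((k + 1) / N)) <= qf f t x ((k + y) / N).
Proof.
  intros HN Hc Ht Hy Hchord.
  assert (Hcn : 0 < 2 * c * N) by nra.
  assert (Htpos : 0 < t).
  { enough (0 < 1 / (2 * c * N)) by lra. apply Rdiv_lt_0_compat; lra. }
  set (s := / (2 * t)).
  assert (Hs : 0 < s) by (apply Rinv_0_lt_compat; lra).
  assert (HscN : s <= c * N).
  { apply Rle_div_l in Ht; [|lra].
    unfold s; rewrite <- Rdiv_1_l; apply Rle_div_l; lra. }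
  assert (Hsq : (x - (k + y) / N) ^ 2
    = y * (x - (k + 1) / N) ^ 2 + (1 - y) * (x - k / N) ^ 2 - y * (1 - y) / (N * N))
    by (field; lra).
  assert (Hgap : y * (1 - y) / (N * N) * s <= c * y * (1 - y) / N).
  { replace (c * y * (1 - y) / N) with (y * (1 - y) / (N * N) * (c * N))
      by (field; lra).
    apply Rmult_le_compat_l; [|lra].
    apply Rmult_le_pos; [nra | left; apply Rinv_0_lt_compat; nra]. }
  assert (Hqf : forall z, qf f t x z = f z + (x - z) ^ 2 * s) by reflexivity.
  rewrite !Hqf, Hsq.
  set (qa := f (k / N) + (x - k / N) ^ 2 * s).
  set (qb := f ((k + 1) / N) + (x - (k + 1) / N) ^ 2 * s).
  assert (Hconv : y * qb + (1 - y) * qa <= f ((k + y) / N)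
    + (y * (x - (k + 1) / N) ^ 2 + (1 - y) * (x - k / N) ^ 2
       - y * (1 - y) / (N * N)) * s).
  { enough (f ((k + y) / N)
      + (y * (x - (k + 1) / N) ^ 2 + (1 - y) * (x - k / N) ^ 2
         - y * (1 - y) / (N * N)) * s - (y * qb + (1 - y) * qa)
      = f ((k + y) / N) - (y * f ((k + 1) / N) + (1 - y) * f (k / N))
        - y * (1 - y) / (N * N) * s) by lra.
    unfold qa, qb; ring. }
  apply Rmin_case_strong; intros Hab; nra.
Qed.

Lemma Cp_periodic_nat (f : R -> R) (n : nat) (x : R) :
  Cp f -> f (x + INR n) = f x.
Proof.
  intros (_ & Hper & _); induction n as [|n IH].
  - simpl; now rewrite Rplus_0_r.
  - rewrite S_INR, <- IH, <- (Hper (x + INR n)); f_equal; lra.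
Qed.

Lemma Cp_zero_at_integers (f : R -> R) (m : Z) : Cp f -> f (IZR m) = 0.
Proof.
  intros HC; assert (H0 : f 0 = 0) by apply HC.
  destruct (Z_le_gt_dec 0 m) as [Hm|Hm].
  - rewrite <- (Z2Nat.id m Hm), <- INR_IZR_INZ, <- (Rplus_0_l (INR _)).
    now rewrite Cp_periodic_nat.
  - replace m with (- Z.of_nat (Z.to_nat (- m)))%Z by lia.
    rewrite opp_IZR, <- INR_IZR_INZ, <- H0, <- (Cp_periodic_nat f (Z.to_nat (- m)) _ HC).
    f_equal; lra.
Qed.

Section GridMinimum.

Variables (r : nat) (c : R) (f : R -> R).
Hypotheses (Hr : (0 < r)%nat) (Hc : 0 < c) (HPc : Pc r c f).

Let Cp_f : Cp f := proj1 HPc.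

Lemma Pc_above_chord (n : nat) (k : Z) (y : R) : 0 < y < 1 ->
  y * f ((IZR k + 1) / INR r ^ n) + (1 - y) * f (IZR k / INR r ^ n)
  + c * y * (1 - y) / INR r ^ n <= f ((IZR k + y) / INR r ^ n).
Proof.
  intros Hy; apply secant_slope_gap_above_chord; [|exact Hy|].
  - apply pow_lt, lt_0_INR; lia.
  - exact (proj2 HPc n k y Hy).
Qed.

Lemma Pc_nonneg (z : R) : 0 <= f z.
Proof.
  destruct (floor_ex z) as [k Hk].
  destruct (Req_dec z (IZR k)) as [->|Hz]; [rewrite (Cp_zero_at_integers f _ Cp_f); lra|].
  assert (Hy : 0 < z - IZR k < 1) by lra.
  pose proof (Pc_above_chord 0 k (z - IZR k) Hy) as Hchord.
  simpl pow in Hchord; rewrite !Rdiv_1_r in Hchord.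
  replace (IZR k + 1) with (IZR (k + 1)) in Hchord by (rewrite plus_IZR; lra).
  replace (IZR k + (z - IZR k)) with z in Hchord by lra.
  rewrite !(Cp_zero_at_integers f) in Hchord by exact Cp_f.
  assert (0 < c * ((z - IZR k) * (1 - (z - IZR k)))) by (apply Rmult_lt_0_compat; nra).
  nra.
Qed.

Variables (n : nat) (t x : R).
Hypotheses (Ht : 1 / (2 * c * INR r ^ n) <= t) (Hx : 0 <= x <= 1).

Let grid_pos : 0 < INR r ^ n := pow_lt _ n (lt_0_INR r Hr).

Let t_pos : 0 < t.
Proof.
  enough (0 < 1 / (2 * c * INR r ^ n)) by lra.
  apply Rdiv_lt_0_compat; [lra|]; nra.
Qed.

Lemma min_grid_le_qf_0 : min_grid f r n t x <= qf f t x 0.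
Proof.
  replace (qf f t x 0) with (qf f t x (INR 0 / INR r ^ n))
    by (f_equal; simpl; field; lra).
  apply min_grid_le; lia.
Qed.

Lemma min_grid_le_qf_1 : min_grid f r n t x <= qf f t x 1.
Proof.
  replace (qf f t x 1) with (qf f t x (INR (r ^ n) / INR r ^ n))
    by (f_equal; rewrite pow_INR; field; lra).
  apply min_grid_le; lia.
Qed.

Lemma min_grid_le_qf_unit_interval (z : R) :
  0 <= z <= 1 -> min_grid f r n t x <= qf f t x z.
Proof.
  intros Hz.
  destruct (Req_dec z 1) as [->|Hz1]; [exact min_grid_le_qf_1|].
  destruct (unit_interval_grid_cell (r ^ n) z) as (k & y & Hk & Hy & ->);
    [apply Nat.neq_0_lt_0, Nat.pow_nonzero; lia | lra |].
  rewrite pow_INR.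
  destruct (Req_dec y 0) as [->|Hy0].
  { rewrite Rplus_0_r; apply min_grid_le; lia. }
  assert (Hy' : 0 < y < 1) by lra.
  pose proof (Pc_above_chord n (Z.of_nat k) y Hy') as Hchord.
  rewrite <- INR_IZR_INZ in Hchord.
  eapply Rle_trans; [|exact (qf_cell_min_le f _ c t x _ y grid_pos Hc Ht Hy' Hchord)].
  apply Rmin_case; [apply min_grid_le; lia|].
  rewrite <- S_INR; apply min_grid_le; lia.
Qed.

Lemma min_grid_le_qf (z : R) : min_grid f r n t x <= qf f t x z.
Proof.
  destruct (Rlt_le_dec z 0) as [Hz0|Hz0].
  { eapply Rle_trans; [exact min_grid_le_qf_0|].
    apply qf_le_of_closer; [exact t_pos | |nra].
    rewrite (proj2 (proj2 Cp_f)); apply Pc_nonneg. }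
  destruct (Rle_lt_dec z 1) as [Hz1|Hz1]; [now apply min_grid_le_qf_unit_interval|].
  eapply Rle_trans; [exact min_grid_le_qf_1|].
  apply qf_le_of_closer; [exact t_pos | |nra].
  rewrite <- (Rplus_0_l 1), (proj1 (proj2 Cp_f)), (proj2 (proj2 Cp_f)).
  apply Pc_nonneg.
Qed.

End GridMinimum.

Theorem theorem4p2 (r : nat) (c : R) (f : R -> R) :
  (2 <= r)%nat -> 0 < c -> Pc r c f ->
  forall (n : nat) (t x : R),
    1 / (2 * c * INR r ^ n) <= t -> 0 <= x <= 1 ->
    Ht f t x = Finite (min_grid f r n t x).
Proof.
  intros Hr Hc HPc n t x Ht Hx.
  apply Glb_Rbar_range_attained.
  - apply min_grid_le_qf with c; auto; lia.
  - destruct (min_grid_attained f r n t x) as [z Hz]; now exists z.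
Qed.
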